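(* For integers $1\le r\le n-1$, the convex hull of $\{\frac{1}{r+1}A: A\in RB(r+1,n)\}$ is contained in the convex hull of $\{\frac1r A: A\in RB(r,n)\}$.
   Context: $RB(r,n)$ is the set of $n\times n$ $0/1$ matrices all of whose row and column sums equal $r$. *)

From mathcomp Require Import all_boot all_order all_algebra.
Unset Printing Implicit Defensive.
Import Order.TTheory GRing.Theory Num.Theory.
Local Open Scope ring_scope.

Definition RB (R : realFieldType) (r n : nat) (A : 'M[R]_n) : Prop :=
  [/\ (forall i j, A i j = 0 \/ A i j = 1),
      (forall i, \sum_(j < n) A i j = r%:R) &
      (forall j, \sum_(i < n) A i j = r%:R)].

Definition conv_hull (R : realFieldType) (n : nat) (S : 'M[R]_n -> Prop)
    (X : 'M[R]_n) : Prop :=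
  exists (k : nat) (w : 'I_k -> R) (P : 'I_k -> 'M[R]_n),
    [/\ (forall i, 0 <= w i),
        \sum_(i < k) w i = 1,
        (forall i, S (P i)) &
        X = \sum_(i < k) w i *: P i].

Definition scaled_RB (R : realFieldType) (r n : nat) (M : 'M[R]_n) : Prop :=
  exists A : 'M[R]_n, RB R r n A /\ M = (r%:R)^-1 *: A.

From mathcomp Require Import all_boot all_order all_algebra fingroup perm zify.
Import Order.TTheory GRing.Theory Num.Theory.

(* A matrix of RB(k+1,n) is the adjacency matrix of a (k+1)-regular bipartite
   graph, so by Hall's theorem its support contains a permutation matrix, and
   removing it leaves a matrix of RB(k,n); hence A is a sum P_0 + ... + P_k of
   permutation matrices.  For A in RB(r+1,n) every A - P_l lies in RB(r,n), and
   these r+1 matrices sum to r A, so A/(r+1) is the average of the points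
   (A - P_l)/r.  Taking convex hulls of convex hulls then gives the inclusion. *)

Set Implicit Arguments.
Unset Strict Implicit.
Unset Printing Implicit Defensive.

Section HallMarriage.
Variables T U : finType.
Implicit Types (E : T -> U -> bool) (A S : {set T}) (B : {set U}) (f g : T -> U).

Definition neighbours E S : {set U} := [set y | [exists x in S, E x y]].

Definition hall_condition E A := forall S, S \subset A -> #|S| <= #|neighbours E S|.

Definition matching E A f := {in A &, injective f} /\ {in A, forall x, E x (f x)}.

Definition avoiding E B x y := E x y && (y \notin B).

Lemma hall_condition_sub E A S : S \subset A -> hall_condition E A -> hall_condition E S.
Proof. by move=> sSA hallA S' sS'S; apply/hallA/(subset_trans sS'S). Qed.

Lemma matching_glue E A S B f g :
    S \subset A -> matching E S f -> {in S, forall x, f x \in B} ->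
    matching (avoiding E B) (A :\: S) g ->
  matching E A (fun x => if x \in S then f x else g x).
Proof.
move=> sSA [injf Ef] fB [injg Eg].
have gB x : x \in A -> x \notin S -> E x (g x) && (g x \notin B).
  by move=> xA xS; apply: Eg; rewrite inE xS xA.
split=> [x x' xA x'A | x xA] /=; last first.
  by case: ifP => xS; [apply: Ef | case/andP: (gB x xA (negbT xS))].
case: ifP => xS; case: ifP => x'S.
- exact: injf.
- by move=> eq_fg; case/andP: (gB x' x'A (negbT x'S)); rewrite -eq_fg fB.
- by move=> eq_gf; case/andP: (gB x xA (negbT xS)); rewrite eq_gf fB.
- by apply: injg; rewrite inE ?xS ?x'S.
Qed.

Lemma hall_condition_tight E A S :
    hall_condition E A -> S \subset A -> #|neighbours E S| <= #|S| ->
  hall_condition (avoiding E (neighbours E S)) (A :\: S).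
Proof.
move=> hallA sSA tightS S' sS'.
have disjS'S : S' :&: S = set0.
  apply/setP=> z; rewrite !inE; apply/negbTE/negP=> /andP[/(subsetP sS')].
  by rewrite inE => /andP[/negPf->].
have card_S'S : #|S' :|: S| = #|S'| + #|S|.
  by rewrite -cardsUI disjS'S cards0 addn0.
have hall_S'S : #|S' :|: S| <= #|neighbours E (S' :|: S)|.
  by apply: hallA; rewrite subUset sSA andbT (subset_trans sS') ?subsetDl.
have cover : neighbours E (S' :|: S) \subset
             neighbours (avoiding E (neighbours E S)) S' :|: neighbours E S.
  apply/subsetP=> y; rewrite inE in_setU => /existsP[x /andP[]].
  rewrite inE => /orP[xS'|xS] Exy.
  - have [yN|yN] := boolP (y \in neighbours E S); first by rewrite orbT.
    rewrite inE; apply/orP; left.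
    by apply/existsP; exists x; rewrite xS' /avoiding Exy yN.
  - by apply/orP; right; rewrite inE; apply/existsP; exists x; rewrite xS.
have := leq_card_setU (neighbours (avoiding E (neighbours E S)) S') (neighbours E S).
case=> + _; have := subset_leq_card cover; lia.
Qed.

Lemma hall_condition_loose E A x y :
    x \in A ->
    (forall S, S \subset A -> S != set0 -> S != A -> #|S| < #|neighbours E S|) ->
  hall_condition (avoiding E [set y]) (A :\ x).
Proof.
move=> xA looseA S sS; have [->|S0] := eqVneq S set0; first by rewrite cards0.
have sSA : S \subset A by apply: subset_trans sS (subsetDl _ _).
have SA : S != A.
  by apply: contraTneq sS => ->; apply/subsetPn; exists x; rewrite ?inE ?eqxx.
have cover : neighbours E S :\ y \subset neighbours (avoiding E [set y]) S.
  apply/subsetP=> z; rewrite !inE => /andP[zy /existsP[w /andP[wS Ewz]]].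
  by apply/existsP; exists w; rewrite wS /avoiding Ewz inE zy.
have := looseA S sSA S0 SA; have := subset_leq_card cover.
have := cardsD1 y (neighbours E S); case: (y \in _) => /=; lia.
Qed.

Lemma matching_set1 E x y : E x y -> matching E [set x] (fun=> y).
Proof. by move=> Exy; split=> [z z' /set1P-> /set1P->|z /set1P->]. Qed.

Theorem hall_marriage (y0 : U) E A : hall_condition E A -> exists f, matching E A f.
Proof.
have [m] := ubnP #|A|; elim: m => // m IH in E A *; rewrite ltnS => leAm hallA.
have [->|[x xA]] := set_0Vmem A; first by exists (fun=> y0); split=> z; rewrite inE.
have [/existsP[S /and4P[sSA S0 SA tightS]]|/existsPn looseA] := boolP
  [exists S : {set T}, [&& S \subset A, S != set0, S != A & #|neighbours E S| <= #|S|]].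
- have ltSA : #|S| < #|A| by rewrite proper_card // properEneq SA.
  have [f matchf] := IH E S (leq_trans ltSA leAm) (hall_condition_sub sSA hallA).
  have [|g matchg] := IH _ (A :\: S) _ (hall_condition_tight hallA sSA tightS).
    rewrite cardsDS // (leq_trans _ leAm) // ltn_subrL !card_gt0 S0.
    by apply/set0Pn; exists x.
  exists (fun x => if x \in S then f x else g x); apply: matching_glue matchg => //.
  by move=> z zS; rewrite inE; apply/existsP; exists z; rewrite zS matchf.2.
- have /set0Pn[y] : neighbours E [set x] != set0.
    by rewrite -card_gt0 -(cards1 x) hallA ?sub1set.
  rewrite inE => /existsP[_ /andP[/set1P-> Exy]].
  have looseA' S : S \subset A -> S != set0 -> S != A -> #|S| < #|neighbours E S|.
    by move=> sSA S0 SA; move: (looseA S); rewrite sSA S0 SA ltnNge.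
  have [|g matchg] := IH _ (A :\ x) _ (hall_condition_loose y xA looseA').
    by rewrite (cardsD1 x A) xA in leAm.
  exists (fun z => if z \in [set x] then y else g z).
  apply: matching_glue (matching_set1 Exy) _ matchg; rewrite ?sub1set //.
  by move=> z _; rewrite inE.
Qed.

End HallMarriage.

Local Open Scope ring_scope.

Section RegularMatrices.
Variables (R : realFieldType) (n : nat).
Implicit Types (A : 'M[R]_n) (s : 'S_n).

Lemma perm_mxE s i j : perm_mx s i j = (s i == j)%:R :> R.
Proof. by rewrite !mxE. Qed.

Lemma perm_mx_row_sum s i : \sum_j perm_mx s i j = 1 :> R.
Proof.
rewrite (bigD1 (s i)) //= big1 ?addr0 => [|j /negPf sij]; rewrite perm_mxE ?eqxx //.
by rewrite eq_sym sij.
Qed.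

Lemma perm_mx_col_sum s j : \sum_i perm_mx s i j = 1 :> R.
Proof.
rewrite -(perm_mx_row_sum s^-1%g j); apply: eq_bigr => i _.
by rewrite -tr_perm_mx [RHS]mxE.
Qed.

Lemma RB_ge0 k A : RB R k n A -> forall i j, 0 <= A i j.
Proof. by case=> A01 _ _ i j; case: (A01 i j) => ->. Qed.

Lemma RB_hall k A : RB R k.+1 n A -> hall_condition (fun i j => A i j == 1) setT.
Proof.
move=> RBA; have [A01 rowA colA] := RBA.
move=> S _; set N := neighbours _ S.
have offN i j : i \in S -> j \notin N -> A i j = 0.
  move=> iS; rewrite inE => /existsPn/(_ i); rewrite iS /=.
  by case: (A01 i j) => ->; rewrite ?eqxx.
suff : \sum_(i in S) k.+1%:R <= \sum_(j in N) k.+1%:R :> R.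
  by rewrite !sumr_const -!mulrnA ler_nat leq_pmul2l.
(* each row of S has its k+1 ones inside N; each column of N has at most k+1 ones in S *)
have -> : \sum_(i in S) k.+1%:R = \sum_(i in S) \sum_(j in N) A i j :> R.
  apply: eq_bigr => i iS; rewrite -(rowA i) [LHS](bigID (mem N)) /=.
  by rewrite [X in _ + X = _]big1 ?addr0 // => j /(offN i j iS).
rewrite exchange_big /=; apply: ler_sum => j _.
rewrite -(colA j) [X in _ <= X](bigID (mem S)) /= lerDl.
by apply: sumr_ge0 => i _; apply: RB_ge0 RBA i j.
Qed.

Lemma RB_perm_support k A : RB R k.+1 n A -> exists s, forall i, A i (s i) = 1.
Proof.
move=> RBA; have [n0|n_gt0] := posnP n.
  by exists 1%g => i; have := ltn_ord i; rewrite [X in (_ < X)%N]n0.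
have [f [injf Af]] := hall_marriage (Ordinal n_gt0) (RB_hall RBA).
have injfT : injective f by move=> i j; apply: injf; rewrite inE.
exists (perm injfT) => i; rewrite permE.
by apply/eqP; apply: Af; rewrite inE.
Qed.

Lemma RB_subr_perm_mx k A s :
  RB R k.+1 n A -> (forall i, A i (s i) = 1) -> RB R k n (A - perm_mx s).
Proof.
move=> [A01 rowA colA] As; split=> [i j | i | j].
- rewrite !mxE; have [<-|_] := eqVneq (s i) j; first by rewrite As subrr; left.
  by rewrite subr0; apply: A01.
- rewrite (eq_bigr (fun j => A i j - perm_mx s i j)) => [|j _]; last by rewrite !mxE.
  by rewrite sumrB rowA perm_mx_row_sum -natr1 addrK.
- rewrite (eq_bigr (fun i => A i j - perm_mx s i j)) => [|i _]; last by rewrite !mxE.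
  by rewrite sumrB colA perm_mx_col_sum -natr1 addrK.
Qed.

Lemma RB_sum_perm_mx k A :
  RB R k n A -> exists s : 'I_k -> 'S_n, A = \sum_l perm_mx (s l).
Proof.
elim: k A => [|k IH] A RBA.
  exists (fun=> 1%g); rewrite big_ord0; apply/matrixP => i j; rewrite mxE.
  by have [_ rowA _] := RBA; apply: (psumr_eq0P (fun j _ => RB_ge0 RBA i j) (rowA i)).
have [s As] := RB_perm_support RBA.
have [t defA] := IH _ (RB_subr_perm_mx RBA As).
exists (fun l => if unlift ord0 l is Some l' then t l' else s).
rewrite big_ord_recl unlift_none; under eq_bigr do rewrite liftK.
by rewrite -defA addrC subrK.
Qed.

Lemma RB_subr_summand k A (s : 'I_k.+1 -> 'S_n) l :
  RB R k.+1 n A -> A = \sum_l perm_mx (s l) -> RB R k n (A - perm_mx (s l)).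
Proof.
move=> RBA defA; apply: RB_subr_perm_mx => // i; have [A01 _ _] := RBA.
have : perm_mx (s l) i (s l i) <= A i (s l i).
  rewrite defA summxE (bigD1 l) //= lerDl; apply: sumr_ge0 => l' _.
  by rewrite perm_mxE ler0n.
by rewrite perm_mxE eqxx; case: (A01 i (s l i)) => ->; rewrite ?ler10.
Qed.

End RegularMatrices.

Section ConvexHull.
Variables (R : realFieldType) (n : nat).
Implicit Types (S T : 'M[R]_n -> Prop) (X : 'M[R]_n).

Lemma conv_hull_fin (I : finType) S (w : I -> R) (P : I -> 'M[R]_n) :
    (forall i, 0 <= w i) -> \sum_i w i = 1 -> (forall i, S (P i)) ->
  conv_hull R n S (\sum_i w i *: P i).
Proof.
move=> w_ge0 w_sum1 SP; exists #|I|, (fun j => w (enum_val j)), (fun j => P (enum_val j)).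
have enum_bij : {on predT, bijective (@enum_val I (mem predT))}.
  exact/onW_bij/enum_val_bij.
split=> //; first by rewrite -w_sum1 [RHS](reindex _ enum_bij).
by rewrite [LHS](reindex _ enum_bij).
Qed.

Lemma conv_hull_conv S T X :
  (forall M, S M -> conv_hull R n T M) -> conv_hull R n S X -> conv_hull R n T X.
Proof.
move=> hullS [k [w [P [w_ge0 w_sum1 SP ->]]]].
have [K hullP] := fin_all_exists (fun i => hullS _ (SP i)).
have [v {}hullP] := fin_all_exists hullP.
have [Q {}hullP] := fin_all_exists hullP.
have sum_sig (V : nmodType) (F : forall i, 'I_(K i) -> V) :
    \sum_i \sum_j F i j = \sum_(p : {i : 'I_k & 'I_(K i)}) F _ (tagged p).
  by rewrite sig_big_dep; apply: eq_bigl.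
have -> : \sum_i w i *: P i = \sum_i \sum_j (w i * v i j) *: Q i j.
  apply: eq_bigr => i _; have [_ _ _ ->] := hullP i.
  by rewrite scaler_sumr; apply: eq_bigr => j _; rewrite scalerA.
rewrite sum_sig; apply: conv_hull_fin => [[i j] | | [i j]] /=.
- by have [v_ge0 _ _ _] := hullP i; rewrite mulr_ge0.
- rewrite -(sum_sig _ (fun i j => w i * v i j)) -[RHS]w_sum1; apply: eq_bigr => i _.
  by rewrite -mulr_sumr; have [_ -> _ _] := hullP i; rewrite mulr1.
- by have [] := hullP i.
Qed.

End ConvexHull.

Lemma scaled_RB_succ_in_hull (R : realFieldType) (n r : nat) (M : 'M[R]_n) :
  (0 < r)%N -> scaled_RB R r.+1 n M -> conv_hull R n (scaled_RB R r n) M.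
Proof.
move=> r_gt0 [A [RBA ->]]; have [s defA] := RB_sum_perm_mx RBA.
have r_neq0 : r%:R != 0 :> R by rewrite pnatr_eq0 -lt0n.
have sum_residues : \sum_l (A - perm_mx (s l)) = r%:R *: A.
  by rewrite sumrB -defA sumr_const card_ord -scaler_nat -natr1 scalerDl scale1r addrK.
have -> : (r.+1%:R)^-1 *: A =
    \sum_(l < r.+1) (r.+1%:R)^-1 *: ((r%:R)^-1 *: (A - perm_mx (s l))).
  by rewrite -!scaler_sumr sum_residues (scalerA (r%:R)^-1) mulVf // scale1r.
apply: conv_hull_fin => [l | | l].
- by rewrite invr_ge0 ler0n.
- by rewrite sumr_const card_ord -[_ *+ _]mulr_natr mulVf // pnatr_eq0.
- by exists (A - perm_mx (s l)); split=> //; apply: RB_subr_summand defA.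
Qed.

Theorem corollary5p13 (R : realFieldType) (n r : nat) :
  (1 <= r)%N -> (r <= n - 1)%N ->
  forall X : 'M[R]_n,
    @conv_hull R n (scaled_RB R r.+1 n) X -> @conv_hull R n (scaled_RB R r n) X.
Proof.
move=> r_gt0 _ X; apply: conv_hull_conv => M.
exact: scaled_RB_succ_in_hull.
Qed.
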